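(* Let $((\mathcal{S},\mathcal{T}),(\mathcal{U},\mathcal{V}))$ be a twin cotorsion pair on a triangulated category $\mathcal{C}$, and put $\mathcal{W}=\mathcal{U}\cap\mathcal{T}$, $\mathcal{C}^+=\mathcal{W}*\mathcal{V}[1]$, $\mathcal{C}^-=\mathcal{S}[-1]*\mathcal{W}$, $\mathcal{H}=\mathcal{C}^+\cap\mathcal{C}^-$. Then $\mathcal{H}\cap(\mathcal{U}*\mathcal{T})=\mathcal{W}$.
   Context: For full subcategories $\mathcal{X},\mathcal{Y}$, $\mathcal{X}*\mathcal{Y}$ is the full subcategory of objects $C$ admitting a distinguished triangle $X\to C\to Y\to X[1]$ with $X\in\mathcal{X}$, $Y\in\mathcal{Y}$. A cotorsion pair $(\mathcal{A},\mathcal{B})$: full subcategories closed under isomorphisms, finite direct sums and summands with $\mathcal{C}=\mathcal{A}*\mathcal{B}[1]$ and $\mathcal{C}(\mathcal{A},\mathcal{B}[1])=0$. A twin cotorsion pair $((\mathcal{S},\mathcal{T}),(\mathcal{U},\mathcal{V}))$ consists of two cotorsion pairs with $\mathcal{C}(\mathcal{S},\mathcal{V}[1])=0$. *)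

From HB Require Import structures.
From mathcomp Require Import all_boot all_algebra.
Set Implicit Arguments. Unset Strict Implicit. Unset Printing Implicit Defensive.
Import GRing.Theory.
Local Open Scope ring_scope.

Record PreaddCat := {
  Obj : Type;
  Hom : Obj -> Obj -> zmodType;
  idm : forall X : Obj, Hom X X;
  comp : forall X Y Z : Obj, Hom Y Z -> Hom X Y -> Hom X Z;
  compA : forall X Y Z W (h : Hom Z W) (g : Hom Y Z) (f : Hom X Y),
      comp h (comp g f) = comp (comp h g) f;
  comp1m : forall X Y (f : Hom X Y), comp (idm Y) f = f;
  compm1 : forall X Y (f : Hom X Y), comp f (idm X) = f;
  compDl : forall X Y Z (g g' : Hom Y Z) (f : Hom X Y),
      comp (g + g') f = comp g f + comp g' f;
  compDr : forall X Y Z (g : Hom Y Z) (f f' : Hom X Y),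
      comp g (f + f') = comp g f + comp g f'
}.
Arguments idm {_} X.
Arguments comp {_ X Y Z} g f.

Section PreaddDefs.
Variable C : PreaddCat.

Definition is_iso (X Y : Obj C) (f : Hom X Y) : Prop :=
  exists g : Hom Y X, comp g f = idm X /\ comp f g = idm Y.

Definition isomorphic (X Y : Obj C) : Prop := exists f : Hom X Y, is_iso f.

Definition is_zero_obj (Z : Obj C) : Prop := idm Z = 0.

Definition is_biprod (X Y P : Obj C) (i1 : Hom X P) (i2 : Hom Y P)
    (p1 : Hom P X) (p2 : Hom P Y) : Prop :=
  [/\ comp p1 i1 = idm X, comp p2 i2 = idm Y, comp p1 i2 = 0, comp p2 i1 = 0
    & comp i1 p1 + comp i2 p2 = idm P].

Definition is_direct_sum (X Y P : Obj C) : Prop :=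
  exists i1 i2 p1 p2, @is_biprod X Y P i1 i2 p1 p2.
End PreaddDefs.

Record AddCat := {
  pa :> PreaddCat;
  has_zero : exists Z : Obj pa, is_zero_obj Z;
  has_biprod : forall X Y : Obj pa, exists P : Obj pa, is_direct_sum X Y P
}.

Record TriCat := {
  ac :> AddCat;
  sh : Obj ac -> Obj ac;
  shm : forall X Y : Obj ac, Hom X Y -> Hom (sh X) (sh Y);
  shm_id : forall X, shm (idm X) = idm (sh X);
  shm_comp : forall X Y Z (g : Hom Y Z) (f : Hom X Y),
      shm (comp g f) = comp (shm g) (shm f);
  shm_add : forall X Y (f g : Hom X Y), shm (f + g) = shm f + shm g;
  (* [1] is an auto-equivalence: fully faithful and essentially surjective *)
  shm_ff : forall X Y : Obj ac, bijective (@shm X Y);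
  sh_ess : forall Y, exists X, isomorphic (sh X) Y;
  dist : forall X Y Z : Obj ac, Hom X Y -> Hom Y Z -> Hom Z (sh X) -> Prop;
  TR1_iso : forall X Y Z X' Y' Z' (f : Hom X Y) (g : Hom Y Z) (h : Hom Z (sh X))
      (f' : Hom X' Y') (g' : Hom Y' Z') (h' : Hom Z' (sh X'))
      (a : Hom X X') (b : Hom Y Y') (c : Hom Z Z'),
      dist f g h -> is_iso a -> is_iso b -> is_iso c ->
      comp f' a = comp b f -> comp g' b = comp c g -> comp h' c = comp (shm a) h ->
      dist f' g' h';
  TR1_id : forall X Z : Obj ac, is_zero_obj Z ->
      dist (idm X) (0 : Hom X Z) (0 : Hom Z (sh X));
  TR1_ext : forall X Y (f : Hom X Y), exists Z (g : Hom Y Z) (h : Hom Z (sh X)),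
      dist f g h;
  TR2 : forall X Y Z (f : Hom X Y) (g : Hom Y Z) (h : Hom Z (sh X)),
      dist f g h <-> dist g h (- shm f);
  TR3 : forall X Y Z X' Y' Z' (f : Hom X Y) (g : Hom Y Z) (h : Hom Z (sh X))
      (f' : Hom X' Y') (g' : Hom Y' Z') (h' : Hom Z' (sh X'))
      (a : Hom X X') (b : Hom Y Y'),
      dist f g h -> dist f' g' h' -> comp f' a = comp b f ->
      exists c : Hom Z Z', comp g' b = comp c g /\ comp h' c = comp (shm a) h;
  TR4 : forall X Y Z Z' X' Y' (f : Hom X Y) (g : Hom Y Z)
      (u : Hom Y Z') (u' : Hom Z' (sh X))
      (v : Hom Z X') (v' : Hom X' (sh Y))
      (w : Hom Z Y') (w' : Hom Y' (sh X)),
      dist f u u' -> dist g v v' -> dist (comp g f) w w' ->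
      exists (a : Hom Z' Y') (b : Hom Y' X'),
        [/\ dist a b (comp (shm u) v'),
            comp a u = comp w g, comp w' a = u',
            comp b w = v & comp v' b = comp (shm f) w']
}.
Arguments sh {_} X.
Arguments shm {_ X Y} f.
Arguments dist {_ X Y Z} f g h.

Section SubDefs.
Variable C : TriCat.

(* full subcategories are given by predicates on objects *)
Definition subcat := Obj C -> Prop.

(* X[1] : the (isomorphism-closed) image of X under [1] *)
Definition shift1 (X : subcat) : subcat :=
  fun Y => exists A, X A /\ isomorphic (sh A) Y.

(* X[-1] : the (isomorphism-closed) image of X under [-1],
   i.e. objects Y with Y[1] isomorphic to an object of X *)
Definition shiftm1 (X : subcat) : subcat :=
  fun Y => exists A, X A /\ isomorphic (sh Y) A.

Definition ext (X Y : subcat) : subcat :=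
  fun M => exists (A B : Obj C) (f : Hom A M) (g : Hom M B) (h : Hom B (sh A)),
    [/\ X A, Y B & dist f g h].

Definition inter (X Y : subcat) : subcat := fun M => X M /\ Y M.

Definition hom_vanish (X Y : subcat) : Prop :=
  forall A B, X A -> Y B -> forall f : Hom A B, f = 0.

Definition good_subcat (X : subcat) : Prop :=
  [/\ (forall A B, isomorphic A B -> X A -> X B),
      (forall Z, is_zero_obj Z -> X Z),
      (forall A B P, is_direct_sum A B P -> X A -> X B -> X P)
    & (forall A B P, is_direct_sum A B P -> X P -> X A)].

Definition cotorsion_pair (A B : subcat) : Prop :=
  [/\ good_subcat A, good_subcat B,
      (forall M, ext A (shift1 B) M)
    & hom_vanish A (shift1 B)].

Definition twin_cotorsion_pair (S T U V : subcat) : Prop :=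
  [/\ cotorsion_pair S T, cotorsion_pair U V & hom_vanish S (shift1 V)].

Definition coreW (T U : subcat) : subcat := inter U T.
Definition Cplus (T U V : subcat) : subcat := ext (coreW T U) (shift1 V).
Definition Cminus (S T U : subcat) : subcat := ext (shiftm1 S) (coreW T U).
Definition heart (S T U V : subcat) : subcat :=
  inter (Cplus T U V) (Cminus S T U).
End SubDefs.

(* A morphism g : M -> B with B in V[1] kills the U-part of a triangle
   U0 -> M -> T0 -> U0[1], so it factors through M -> T0; a morphism M -> T0
   kills the S[-1]-part of a triangle A -> M -> W0 -> A[1], so it factors
   through M -> W0; and W0 -> B vanishes because W0 lies in U.  Hence for M in
   C^- and in U * T the map M -> B in a triangle W1 -> M -> B -> W1[1]
   exhibiting M in C^+ is zero, and M is a direct summand of W1 in W. *)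
From mathcomp Require Import all_boot all_algebra.
Set Implicit Arguments. Unset Strict Implicit. Unset Printing Implicit Defensive.
Import GRing.Theory.
Local Open Scope ring_scope.

Section Preadditive.
Variable C : PreaddCat.

Lemma comp0m (X Y Z : Obj C) (f : Hom X Y) : comp (0 : Hom Y Z) f = 0.
Proof.
have E := compDl (0 : Hom Y Z) 0 f; rewrite addr0 in E.
by apply: (addrI (comp (0 : Hom Y Z) f)); rewrite addr0 -E.
Qed.

Lemma compm0 (X Y Z : Obj C) (g : Hom Y Z) : comp g (0 : Hom X Y) = 0.
Proof.
have E := compDr g (0 : Hom X Y) 0; rewrite addr0 in E.
by apply: (addrI (comp g (0 : Hom X Y))); rewrite addr0 -E.
Qed.

Lemma compNm (X Y Z : Obj C) (g : Hom Y Z) (f : Hom X Y) :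
  comp (- g) f = - comp g f.
Proof.
have E := compDl g (- g) f; rewrite subrr comp0m in E.
by apply/eqP; rewrite -subr_eq0 opprK addrC -E.
Qed.

Lemma compmN (X Y Z : Obj C) (g : Hom Y Z) (f : Hom X Y) :
  comp g (- f) = - comp g f.
Proof.
have E := compDr g f (- f); rewrite subrr compm0 in E.
by apply/eqP; rewrite -subr_eq0 opprK addrC -E.
Qed.

Lemma compBl (X Y Z : Obj C) (g g' : Hom Y Z) (f : Hom X Y) :
  comp (g - g') f = comp g f - comp g' f.
Proof. by rewrite compDl compNm. Qed.

Lemma compBr (X Y Z : Obj C) (g : Hom Y Z) (f f' : Hom X Y) :
  comp g (f - f') = comp g f - comp g f'.
Proof. by rewrite compDr compmN. Qed.

Lemma isomorphic_refl (X : Obj C) : isomorphic X X.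
Proof. by exists (idm X), (idm X); split; rewrite comp1m. Qed.

Lemma isomorphic_zero (Z Z' : Obj C) :
  is_zero_obj Z -> is_zero_obj Z' -> isomorphic Z Z'.
Proof. by move=> zZ zZ'; exists 0, 0; split; rewrite comp0m ?zZ ?zZ'. Qed.

End Preadditive.

Section Triangulated.
Variable C : TriCat.

Lemma shm0 (X Y : Obj C) : shm (0 : Hom X Y) = 0.
Proof.
have E := shm_add (0 : Hom X Y) 0; rewrite addr0 in E.
by apply: (addrI (shm (0 : Hom X Y))); rewrite addr0 -E.
Qed.

Lemma shmN (X Y : Obj C) (f : Hom X Y) : shm (- f) = - shm f.
Proof.
have E := shm_add f (- f); rewrite subrr shm0 in E.
by apply/eqP; rewrite -subr_eq0 opprK addrC -E.
Qed.

Lemma shm_inj (X Y : Obj C) : injective (@shm C X Y).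
Proof. exact: bij_inj (shm_ff X Y). Qed.

Lemma shm_surj (X Y : Obj C) (c : Hom (sh X) (sh Y)) : exists f, shm f = c.
Proof. by case: (shm_ff X Y) => g _ gK; exists (g c). Qed.

Lemma sh_zero (Z : Obj C) : is_zero_obj Z -> is_zero_obj (sh Z).
Proof. by rewrite /is_zero_obj => zZ; rewrite -shm_id zZ shm0. Qed.

Lemma dist_zero_id (Z W : Obj C) :
  is_zero_obj Z -> dist (0 : Hom Z W) (idm W) (0 : Hom W (sh Z)).
Proof. by move=> zZ; apply/TR2; rewrite shm0 oppr0; exact: TR1_id (sh_zero zZ). Qed.

Lemma dist_comp0 (X Y Z : Obj C) (f : Hom X Y) (g : Hom Y Z) (h : Hom Z (sh X)) :
  dist f g h -> comp g f = 0.
Proof.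
move=> dfgh; have [Z0 zZ0] := has_zero C.
have [c [-> _]] := TR3 (TR1_id X zZ0) dfgh (erefl (comp f (idm X))).
by rewrite compm0.
Qed.

Lemma dist_factor_next (X Y Z W : Obj C) (f : Hom X Y) (g : Hom Y Z)
    (h : Hom Z (sh X)) (phi : Hom Y W) :
  dist f g h -> comp phi f = 0 -> exists psi, phi = comp psi g.
Proof.
move=> dfgh phif0; have [Z0 zZ0] := has_zero C.
have sq : comp (0 : Hom Z0 W) (0 : Hom X Z0) = comp phi f by rewrite phif0 comp0m.
have [c [phiE _]] := TR3 dfgh (dist_zero_id W zZ0) sq.
by exists c; rewrite -phiE comp1m.
Qed.

Lemma dist_lift_prev (X Y Z W : Obj C) (f : Hom X Y) (g : Hom Y Z)
    (h : Hom Z (sh X)) (psi : Hom W Y) :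
  dist f g h -> comp g psi = 0 -> exists sig, comp f sig = psi.
Proof.
move=> dfgh gpsi0; have [Z0 zZ0] := has_zero C.
have dW := proj1 (TR2 _ _ _) (TR1_id W zZ0).
have sq : comp g psi = comp (0 : Hom Z0 Z) (0 : Hom W Z0) by rewrite gpsi0 comp0m.
have [c [_ shE]] := TR3 dW (proj1 (TR2 f g h) dfgh) sq.
have [s sE] := shm_surj c; exists s; apply: shm_inj.
move: shE; rewrite -sE compNm compmN shm_id compm1 -shm_comp.
by move/eqP; rewrite eqr_opp => /eqP.
Qed.

Lemma dist0_mono (K X Y W : Obj C) (i : Hom K X) (f : Hom X Y) :
  dist i f (0 : Hom Y (sh K)) -> forall phi : Hom W K, comp i phi = 0 -> phi = 0.
Proof.
move=> difo phi iphi0.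
have drot := proj1 (TR2 _ _ _) (proj1 (TR2 _ _ _) difo).
have shiphi0 : comp (- shm i) (shm phi) = 0.
  by rewrite compNm -shm_comp iphi0 shm0 oppr0.
have [l lE] := dist_lift_prev drot shiphi0.
by apply: shm_inj; rewrite -lE comp0m shm0.
Qed.

Lemma dist0_summand (X Y Z : Obj C) (f : Hom X Y) (h : Hom Z (sh X)) :
  dist f (0 : Hom Y Z) h -> exists K, is_direct_sum Y K X.
Proof.
move=> df0h.
have [s fs] := dist_lift_prev df0h (comp0m _ (idm Y)).
have [K [a [a' [a'a aa']]]] := sh_ess Z.
have [i' i'E] := shm_surj (comp h a).
(* replace Z by the isomorphic K[1], so that the triangle rotates back to K *)
have df0ha : dist f (0 : Hom Y (sh K)) (comp h a).
  apply: (TR1_iso (a := idm X) (b := idm Y) (c := a') df0h).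
  - by exists (idm X); rewrite comp1m.
  - by exists (idm Y); rewrite comp1m.
  - by exists a.
  - by rewrite compm1 comp1m.
  - by rewrite comp0m compm0.
  - by rewrite -compA aa' compm1 shm_id comp1m.
have dKXY : dist (- i') f (0 : Hom Y (sh K)).
  by apply/TR2; rewrite shmN opprK i'E.
have fi'0 : comp f (- i') = 0 by exact: dist_comp0 dKXY.
have f_ker : comp f (idm X - comp s f) = 0.
  by rewrite compBr compm1 compA fs comp1m subrr.
have [p pE] := dist_lift_prev dKXY f_ker.
exists K, s, (- i'), f, p; split => //.
- apply/eqP; rewrite -subr_eq0; apply/eqP; apply: (dist0_mono dKXY).
  by rewrite compBr compm1 compA pE compBl comp1m -compA fi'0 compm0 subr0 subrr.
- apply: (dist0_mono dKXY).
  by rewrite compA pE compBl comp1m -compA fs compm1 subrr.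
- by rewrite pE addrC subrK.
Qed.

Lemma hom_vanish_shiftm1 (X Y : subcat C) :
  hom_vanish X (shift1 Y) -> hom_vanish (shiftm1 X) Y.
Proof.
move=> vanXY A B [A' [XA' [b [b' [b'b _]]]]] YB f.
have shfb'0 : comp (shm f) b' = 0.
  by apply: (vanXY _ (sh B) XA'); exists B; split; last exact: isomorphic_refl.
apply: shm_inj; rewrite shm0.
by rewrite -(compm1 (shm f)) -b'b compA shfb'0 comp0m.
Qed.

Lemma shift1_zero (X : subcat C) :
  (forall Z0, is_zero_obj Z0 -> X Z0) -> forall Z, is_zero_obj Z -> shift1 X Z.
Proof.
move=> X0 Z zZ; have [Z0 zZ0] := has_zero C.
by exists Z0; split; [exact: X0 | exact: isomorphic_zero (sh_zero zZ0) zZ].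
Qed.

Lemma shiftm1_zero (X : subcat C) :
  (forall Z0, is_zero_obj Z0 -> X Z0) -> forall Z, is_zero_obj Z -> shiftm1 X Z.
Proof.
move=> X0 Z zZ; exists (sh Z); split; last exact: isomorphic_refl.
exact/X0/sh_zero.
Qed.

Lemma ext_zero_r (X Y : subcat C) (M : Obj C) :
  (forall Z, is_zero_obj Z -> Y Z) -> X M -> ext X Y M.
Proof.
move=> Y0 XM; have [Z0 zZ0] := has_zero C.
by exists M, Z0, (idm M), 0, 0; split; [| exact: Y0 | exact: TR1_id].
Qed.

Lemma ext_zero_l (X Y : subcat C) (M : Obj C) :
  (forall Z, is_zero_obj Z -> X Z) -> Y M -> ext X Y M.
Proof.
move=> X0 YM; have [Z0 zZ0] := has_zero C.
by exists Z0, M, 0, (idm M), 0; split; [exact: X0 | | exact: dist_zero_id].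
Qed.

Lemma Cminus_ext_hom_vanish (S T U V : subcat C) :
  hom_vanish S (shift1 T) -> hom_vanish U (shift1 V) ->
  hom_vanish (inter (Cminus S T U) (ext U T)) (shift1 V).
Proof.
move=> vanST vanUV M B [[A [W0 [a [w [k [SA [UW0 _] dA]]]]]]
                        [U0 [T0 [u [t [k' [UU0 TT0 dU]]]]]]] VB g.
have [psi ->] := dist_factor_next dU (vanUV _ _ UU0 VB (comp g u)).
have [c ->] := dist_factor_next dA (hom_vanish_shiftm1 vanST SA TT0 (comp t a)).
by rewrite compA (vanUV _ _ UW0 VB (comp psi c)) comp0m.
Qed.

End Triangulated.

Theorem lemma2p6 (C : TriCat) (S T U V : subcat C) :
  twin_cotorsion_pair S T U V ->
  forall M : Obj C,
    inter (heart S T U V) (ext U T) M <-> coreW T U M.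
Proof.
move=> [[[_ S0 _ _] [_ T0 _ Tsummand] _ vanST]
        [[_ _ _ Usummand] [_ V0 _ _] _ vanUV] _] M.
split.
- move=> [[[W1 [B [w [g [h [[UW1 TW1] VB dW]]]]]] Cminus_M] UT_M].
  have g0 : g = 0 by exact: (Cminus_ext_hom_vanish vanST vanUV (conj Cminus_M UT_M) VB).
  rewrite g0 in dW; have [K MW1] := dist0_summand dW.
  by split; [exact: Usummand MW1 UW1 | exact: Tsummand MW1 TW1].
- move=> WM; split; last exact: ext_zero_r T0 (proj1 WM).
  split; first exact: ext_zero_r (shift1_zero V0) WM.
  exact: ext_zero_l (shiftm1_zero S0) WM.
Qed.
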